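(* Let $\mathscr{H}$ be a complex Hilbert space and let $N(\cdot)$ be a norm on $\mathbb{B}(\mathscr{H})$ which is an algebra norm ($N(XY)\leq N(X)N(Y)$ for all $X,Y$) and self-adjoint ($N(X^* )=N(X)$ for all $X$). Then for every $T\in\mathbb{B}(\mathscr{H})$, $$\frac1{16}N(T^*T+TT^* )+\frac12 w_N(T)\,|N(\Re T)-N(\Im T)|\leq w_N^2(T).$$
   Context: For $T\in\mathbb{B}(\mathscr{H})$: $\Re(T)=\frac12(T+T^* )$, $\Im(T)=\frac1{2i}(T-T^* )$, and $w_N(T)=\sup_{\theta\in\mathbb{R}}N(\Re(e^{i\theta}T))$. *)

From Stdlib Require Import ClassicalEpsilon.
From mathcomp Require Import all_boot all_order all_algebra.
From mathcomp Require Import boolp classical_sets reals trigo.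
From mathcomp Require Import complex.

Set Implicit Arguments.
Unset Strict Implicit.
Unset Printing Implicit Defensive.

Import Order.TTheory GRing.Theory Num.Theory ComplexField.
Local Open Scope ring_scope.
Local Open Scope classical_set_scope.

Definition ipnorm (R : realType) (V : lmodType R[i]) (ip : V -> V -> R[i])
  (x : V) : R := Num.sqrt (complex.Re (ip x x)).

Definition is_inner_product (R : realType) (V : lmodType R[i])
  (ip : V -> V -> R[i]) : Prop :=
  [/\ (forall (a : R[i]) (x y z : V), ip (a *: x + y) z = a * ip x z + ip y z),
      (forall x y : V, ip y x = ((ip x y)^*)%C),
      (forall x : V, 0 <= complex.Re (ip x x)) &
      (forall x : V, ip x x = 0 -> x = 0)].

Definition ip_complete (R : realType) (V : lmodType R[i])
  (ip : V -> V -> R[i]) : Prop :=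
  forall u : nat -> V,
    (forall e : R, 0 < e -> exists n0 : nat, forall m n : nat,
        (n0 <= m)%N -> (n0 <= n)%N -> ipnorm ip (u m - u n) < e) ->
    exists l : V, forall e : R, 0 < e -> exists n0 : nat, forall n : nat,
        (n0 <= n)%N -> ipnorm ip (u n - l) < e.

Definition is_hilbert (R : realType) (V : lmodType R[i])
  (ip : V -> V -> R[i]) : Prop := is_inner_product ip /\ ip_complete ip.

Definition is_linear_op (R : realType) (V : lmodType R[i]) (X : V -> V) : Prop :=
  forall (a : R[i]) (x y : V), X (a *: x + y) = a *: X x + X y.

Definition is_bounded_op (R : realType) (V : lmodType R[i])
  (ip : V -> V -> R[i]) (X : V -> V) : Prop :=
  is_linear_op X /\ exists M : R, forall x : V, ipnorm ip (X x) <= M * ipnorm ip x.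

Definition opD (R : realType) (V : lmodType R[i]) (X Y : V -> V) : V -> V :=
  fun x => X x + Y x.
Definition opZ (R : realType) (V : lmodType R[i]) (c : R[i]) (X : V -> V)
  : V -> V := fun x => c *: X x.
Definition opM (R : realType) (V : lmodType R[i]) (X Y : V -> V) : V -> V :=
  fun x => X (Y x).

Definition is_adjoint (R : realType) (V : lmodType R[i])
  (ip : V -> V -> R[i]) (X S : V -> V) : Prop :=
  forall x y : V, ip (X x) y = ip x (S y).

(* The adjoint X^* (it exists and is unique for X in B(H), H Hilbert, by
   the Riesz representation theorem; we pick it by choice). *)
Definition adj (R : realType) (V : lmodType R[i]) (ip : V -> V -> R[i])
  (X : V -> V) : V -> V :=
  epsilon (inhabits (fun x : V => x)) (fun S => is_adjoint ip X S).

Definition ReOp (R : realType) (V : lmodType R[i]) (ip : V -> V -> R[i])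
  (T : V -> V) : V -> V := opZ (2%:R)^-1 (opD T (adj ip T)).
Definition ImOp (R : realType) (V : lmodType R[i]) (ip : V -> V -> R[i])
  (T : V -> V) : V -> V :=
  opZ (2%:R * 'i%C)^-1 (opD T (opZ (-1) (adj ip T))).

Definition expi (R : realType) (t : R) : R[i] := (cos t +i* sin t)%C.

Definition wN (R : realType) (V : lmodType R[i]) (ip : V -> V -> R[i])
  (N : (V -> V) -> R) (T : V -> V) : R :=
  sup [set N (ReOp ip (opZ (expi t) T)) | t in [set: R]].

Definition is_op_norm (R : realType) (V : lmodType R[i]) (ip : V -> V -> R[i])
  (N : (V -> V) -> R) : Prop :=
  [/\ (forall X, is_bounded_op ip X -> 0 <= N X),
      (forall X, is_bounded_op ip X -> N X = 0 -> X = (fun _ => 0)),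
      (forall (c : R[i]) X, is_bounded_op ip X -> N (opZ c X) = Normc.normc c * N X) &
      (forall X Y, is_bounded_op ip X -> is_bounded_op ip Y ->
         N (opD X Y) <= N X + N Y)].

Definition is_algebra_norm (R : realType) (V : lmodType R[i])
  (ip : V -> V -> R[i]) (N : (V -> V) -> R) : Prop :=
  forall X Y, is_bounded_op ip X -> is_bounded_op ip Y ->
    N (opM X Y) <= N X * N Y.

Definition is_selfadjoint_norm (R : realType) (V : lmodType R[i])
  (ip : V -> V -> R[i]) (N : (V -> V) -> R) : Prop :=
  forall X, is_bounded_op ip X -> N (adj ip X) = N X.

(* Write A = Re T and B = Im T.  Expanding the squares gives
   T^*T + TT^* = 2 (A^2 + B^2), so, N being an algebra norm, the N-norm of the left
   side is at most 2 (N(A)^2 + N(B)^2).  As A = Re(e^{i0} T) and B = Re(e^{-i pi/2} T),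
   both N(A) and N(B) are at most w = w_N(T) (a finite supremum, bounded by N(T)
   since N is self-adjoint), and 0 <= a, b <= w implies
   (a^2 + b^2)/8 + w |a - b|/2 <= w^2.
   The adjoint is only specified by a choice operator, so its existence is derived
   from the Riesz representation theorem, proved by minimising the norm on the affine
   hyperplane {phi = 1}: a minimising sequence is Cauchy by the parallelogram law, and
   its limit is orthogonal to the kernel of phi. *)

From Stdlib Require Import ClassicalEpsilon.
From mathcomp Require Import all_boot all_order all_algebra.
From mathcomp Require Import boolp classical_sets reals trigo.
From mathcomp Require Import complex.
From mathcomp Require Import ring lra.

Set Implicit Arguments.
Unset Strict Implicit.
Unset Printing Implicit Defensive.
Import Order.TTheory GRing.Theory Num.Theory ComplexField.
Local Open Scope ring_scope.

Lemma eventually_invSn_lt (R : archiFieldType) (c : R) :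
  0 < c -> exists n0, forall n, (n0 <= n)%N -> n.+1%:R^-1 < c.
Proof.
move=> c_gt0; exists (Num.Def.truncn c^-1) => n le_n0n.
rewrite invf_plt ?posrE ?ltr0Sn //; apply: lt_le_trans (truncnS_gt _) _.
by rewrite ler_nat ltnS.
Qed.

Lemma sub_alternating_sum (Z : zmodType) (a b c d : Z) :
  (a + b + (c + d)) - (a - b - (c - d)) = (b + c) *+ 2.
Proof.
have -> : a + b + (c + d) = (a + d) + (b + c) by rewrite [c + d]addrC addrACA.
have -> : a - b - (c - d) = (a + d) - (b + c) by rewrite opprB [- (b + c)]opprD addrACA.
by rewrite opprB [LHS]addrC addrA subrK mulr2n.
Qed.

Lemma cartesian_ineq (R : realFieldType) (a b c w : R) :
  0 <= a -> a <= w -> 0 <= b -> b <= w -> c <= 2 * (a ^+ 2 + b ^+ 2) ->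
  16%:R^-1 * c + 2%:R^-1 * w * `|a - b| <= w ^+ 2.
Proof.
move=> a_ge0 a_le b_ge0 b_le c_le.
have [ba|ab] := leP b a; [rewrite ger0_norm ?subr_ge0 // | rewrite ltr0_norm ?subr_lt0 //]; nra.
Qed.

Lemma normc_sqr (R : rcfType) (a : R[i]) :
  Normc.normc a ^+ 2 = complex.Re a ^+ 2 + complex.Im a ^+ 2.
Proof. by case: a => a b; rewrite /= sqr_sqrtr // addr_ge0 ?sqr_ge0. Qed.

Lemma normc_ge0 (R : rcfType) (a : R[i]) : 0 <= Normc.normc a.
Proof. by case: a => a b; apply: sqrtr_ge0. Qed.

Lemma normc_natr (R : rcfType) n : Normc.normc (n%:R : R[i]) = n%:R.
Proof.
by rewrite -(rmorph_nat (real_complex R)) /Normc.normc /= expr0n addr0 sqrtr_sqr normr_nat.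
Qed.

Lemma normc_expi (R : realType) (t : R) : Normc.normc (expi t) = 1.
Proof. by rewrite /expi /Normc.normc cos2Dsin2 sqrtr1. Qed.

Lemma expi_Npihalf (R : realType) : expi (- (pi / 2) : R) = - 'i%C.
Proof.
rewrite /expi cosN sinN cos_pihalf sin_pihalf.
by apply/eqP; rewrite eq_complex /= oppr0 !eqxx.
Qed.

Section LinearMaps.
Variables (K : pzRingType) (U W : lmodType K) (f : U -> W).
Hypothesis f_linear : forall a x y, f (a *: x + y) = a *: f x + f y.

Lemma lin0 : f 0 = 0.
Proof.
apply: (@addrI _ (f 0)); rewrite addr0 -{1}(scale1r (f 0)) -f_linear.
by rewrite scale1r addr0.
Qed.

Lemma linD x y : f (x + y) = f x + f y.
Proof. by rewrite -[x]scale1r f_linear !scale1r. Qed.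

Lemma linZ a x : f (a *: x) = a *: f x.
Proof. by rewrite -[a *: x]addr0 f_linear lin0 addr0. Qed.

Lemma linB x y : f (x - y) = f x - f y.
Proof. by rewrite -scaleN1r linD linZ scaleN1r. Qed.

End LinearMaps.

Section InnerProduct.
Variables (R : realType) (V : lmodType R[i]) (ip : V -> V -> R[i]).
Hypothesis ip_inner : is_inner_product ip.

Local Notation nrm := (ipnorm ip).
Local Notation qf x := (complex.Re (ip x x)).

Lemma ipl_linear z a x y : ip (a *: x + y) z = a * ip x z + ip y z.
Proof. by case: ip_inner. Qed.

Lemma ipC x y : ip y x = ((ip x y)^*)%C.
Proof. by case: ip_inner. Qed.

Lemma ip0l y : ip 0 y = 0.
Proof. exact: (@lin0 _ _ R[i]^o _ (ipl_linear y)). Qed.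

Lemma ipDl x y z : ip (x + y) z = ip x z + ip y z.
Proof. exact: (@linD _ _ R[i]^o _ (ipl_linear z)). Qed.

Lemma ipZl a x z : ip (a *: x) z = a * ip x z.
Proof. exact: (@linZ _ _ R[i]^o _ (ipl_linear z)). Qed.

Lemma ipBl x y z : ip (x - y) z = ip x z - ip y z.
Proof. exact: (@linB _ _ R[i]^o _ (ipl_linear z)). Qed.

Lemma ip0r y : ip y 0 = 0.
Proof. by rewrite ipC ip0l conjc0. Qed.

Lemma ipDr x y z : ip z (x + y) = ip z x + ip z y.
Proof. by rewrite ipC ipDl rmorphD /= -!ipC. Qed.

Lemma ipZr a x z : ip z (a *: x) = (a^*)%C * ip z x.
Proof. by rewrite ipC ipZl rmorphM /= -ipC. Qed.

Lemma ipBr x y z : ip z (x - y) = ip z x - ip z y.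
Proof. by rewrite ipC ipBl rmorphB /= -!ipC. Qed.

Lemma ipxx x : ip x x = ((qf x)%:C)%C.
Proof.
have := ipC x x; case: (ip x x) => a b [] /eqP.
by rewrite -subr_eq0 opprK -mulr2n mulrn_eq0 /= => /eqP ->.
Qed.

Lemma qf_ge0 x : 0 <= qf x.
Proof. by case: ip_inner. Qed.

Lemma qf_eq0 x : qf x = 0 -> x = 0.
Proof.
case: ip_inner => _ _ _ definite qx0; apply: definite.
by rewrite ipxx qx0.
Qed.

Lemma ipr_ext u v : (forall x, ip x u = ip x v) -> u = v.
Proof. by move=> huv; apply/eqP; rewrite -subr_eq0; apply/eqP/qf_eq0; rewrite ipBr huv subrr. Qed.

Lemma qfD x y : qf (x + y) = qf x + qf y + 2 * complex.Re (ip x y).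
Proof.
rewrite !ipDl !ipDr [ip y x]ipC.
by case: (ip x x) (ip y y) (ip x y) => [a b] [c d] [e f] /=; ring.
Qed.

Lemma qfZ a x : qf (a *: x) = (complex.Re a ^+ 2 + complex.Im a ^+ 2) * qf x.
Proof.
by rewrite ipZl ipZr ipxx; case: a => a b /=; ring.
Qed.

Lemma qf_parallelogram x y : qf (x - y) + qf (x + y) = 2 * qf x + 2 * qf y.
Proof.
rewrite -scaleN1r qfD qfD qfZ ipZr /=.
by case: (ip x y) => a b /=; ring.
Qed.

Lemma ipnorm_ge0 x : 0 <= nrm x.
Proof. exact: sqrtr_ge0. Qed.

Lemma ipnorm_sqr x : nrm x ^+ 2 = qf x.
Proof. by rewrite sqr_sqrtr // qf_ge0. Qed.

Lemma ipnormZ a x : nrm (a *: x) = Normc.normc a * nrm x.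
Proof. by rewrite /ipnorm qfZ -normc_sqr sqrtrM ?sqr_ge0 // sqrtr_sqr ger0_norm ?normc_ge0. Qed.

Lemma ipnormN x : nrm (- x) = nrm x.
Proof. by rewrite -scaleN1r ipnormZ normcN Normc.normc1 mul1r. Qed.

Lemma ipnorm_distC x y : nrm (x - y) = nrm (y - x).
Proof. by rewrite -opprB ipnormN. Qed.

Lemma Re_ip_le x y : complex.Re (ip x y) <= nrm x * nrm y.
Proof.
have [/qf_eq0 ->|qy0] := eqVneq (qf y) 0.
  by rewrite ip0r /ipnorm ip0r /= sqrtr0 mulr0.
have qy_gt0 : 0 < qf y by rewrite lt_def qy0 qf_ge0.
set g := complex.Re (ip x y).
have quad s : 0 <= qf x + 2 * s * g + s ^+ 2 * qf y.
  have := qf_ge0 (x + (s%:C)%C *: y); rewrite qfD qfZ ipZr /g.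
  by case: (ip x y) => a b /=; nra.
have g2_le : g ^+ 2 <= (nrm x * nrm y) ^+ 2.
  rewrite exprMn !ipnorm_sqr; have := quad (- g / qf y).
  have -> : qf x + 2 * (- g / qf y) * g + (- g / qf y) ^+ 2 * qf y = qf x - g ^+ 2 / qf y.
    by field; rewrite qy0.
  by rewrite subr_ge0 ler_pdivrMr.
have := mulr_ge0 (ipnorm_ge0 x) (ipnorm_ge0 y); nra.
Qed.

Lemma normc_ip_le x y : Normc.normc (ip x y) <= nrm x * nrm y.
Proof.
have := Re_ip_le x (ip x y *: y); rewrite ipZr ipnormZ.
have -> : complex.Re ((ip x y)^*%C * ip x y) = Normc.normc (ip x y) ^+ 2.
  by rewrite normc_sqr; case: (ip x y) => a b /=; ring.
have := normc_ge0 (ip x y); have := mulr_ge0 (ipnorm_ge0 x) (ipnorm_ge0 y); nra.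
Qed.

Lemma ler_ipnormD x y : nrm (x + y) <= nrm x + nrm y.
Proof.
have : nrm (x + y) ^+ 2 <= (nrm x + nrm y) ^+ 2.
  by rewrite ipnorm_sqr qfD -!ipnorm_sqr; have := Re_ip_le x y; nra.
by have := ipnorm_ge0 (x + y); have := ipnorm_ge0 x; have := ipnorm_ge0 y; nra.
Qed.

Lemma ler_ipnormB x y : nrm (x - y) <= nrm x + nrm y.
Proof. by rewrite -(ipnormN y); apply: ler_ipnormD. Qed.

Definition ip_lim (u : nat -> V) (l : V) := forall e, 0 < e ->
  exists n0, forall n, (n0 <= n)%N -> nrm (u n - l) < e.

Section Riesz.
Variables (phi : V -> R[i]) (C : R).
Hypothesis phi_linear : forall a x y, phi (a *: x + y) = a * phi x + phi y.
Hypothesis C_ge0 : 0 <= C.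
Hypothesis phi_bounded : forall x, Normc.normc (phi x) <= C * nrm x.

Let phi0 := @lin0 _ _ R[i]^o _ phi_linear.
Let phiD := @linD _ _ R[i]^o _ phi_linear.
Let phiZ := @linZ _ _ R[i]^o _ phi_linear.
Let phiB := @linB _ _ R[i]^o _ phi_linear.

Lemma hyperplane_closed u l :
  (forall n, phi (u n) = 1) -> ip_lim u l -> phi l = 1.
Proof.
move=> phiu1 ul; apply/eqP; rewrite -subr_eq0; apply/eqP/Normc.eq0_normc/eqP.
rewrite eq_le normc_ge0 andbT; apply/ler_addgt0Pr => e e_gt0; rewrite add0r.
have [n0 n0_lim] := ul (e / (C + 1)) (divr_gt0 e_gt0 (ltr_wpDl C_ge0 ltr01)).
rewrite -(phiu1 n0) -phiB; apply: le_trans (phi_bounded _) _.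
rewrite ipnorm_distC; apply: le_trans (ler_wpM2l C_ge0 (ltW (n0_lim n0 (leqnn n0)))) _.
by rewrite mulrA ler_pdivrMr ?ltr_wpDl //; nra.
Qed.

Section Minimizer.
Variable y1 : V.
Hypothesis phi_y1 : phi y1 = 1.

Let E := [set qf y | y in [set y | phi y = 1]]%classic.
Let d := inf E.

Let has_inf_E : has_inf E.
Proof. by split; [exists (qf y1), y1 | exists 0 => _ [y _ <-]; apply: qf_ge0]. Qed.

Let d_le y : phi y = 1 -> d <= qf y.
Proof. by move=> phiy; apply: ge_inf has_inf_E.2 _ _; exists y. Qed.

Let d_ge0 : 0 <= d.
Proof. by apply: lb_le_inf has_inf_E.1 _ => _ [y _ <-]; apply: qf_ge0. Qed.

Lemma hyperplane_qfB_le y z : phi y = 1 -> phi z = 1 ->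
  qf (y - z) <= 2 * qf y + 2 * qf z - 4 * d.
Proof.
move=> phiy phiz; have := qf_parallelogram y z.
have phi_mid : phi ((2%:R^-1 : R)%:C%C *: (y + z)) = 1.
  rewrite phiZ phiD phiy phiz; apply/eqP; rewrite eq_complex /=.
  by apply/andP; split; apply/eqP; field.
have := d_le phi_mid; rewrite qfZ /= expr0n /= addr0; lra.
Qed.

Lemma exists_minimizing_seq : exists u : nat -> V,
  forall n, phi (u n) = 1 /\ qf (u n) < d + n.+1%:R^-1.
Proof.
suff /choice[u min_u] : forall n, exists y, phi y = 1 /\ qf y < d + n.+1%:R^-1.
  by exists u.
move=> n.
have inv_gt0 : 0 < (n.+1%:R : R)^-1 by rewrite invr_gt0 ltr0Sn.
have [_ [y phiy <-] qy_lt] := inf_adherent inv_gt0 has_inf_E.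
by exists y.
Qed.

Section MinimizingSeq.
Variable u : nat -> V.
Hypothesis phiu1 : forall n, phi (u n) = 1.
Hypothesis qfu_lt : forall n, qf (u n) < d + n.+1%:R^-1.

Lemma minimizing_seq_cauchy (e : R) : 0 < e ->
  exists n0, forall m n, (n0 <= m)%N -> (n0 <= n)%N -> nrm (u m - u n) < e.
Proof.
move=> e_gt0; have [n0 n0_inv] := eventually_invSn_lt (divr_gt0 (exprn_gt0 2 e_gt0) (ltr0Sn R 3)).
exists n0 => m n n0m n0n.
have : nrm (u m - u n) ^+ 2 < e ^+ 2.
  rewrite ipnorm_sqr; have := hyperplane_qfB_le (phiu1 m) (phiu1 n).
  have := qfu_lt m; have := qfu_lt n; have := n0_inv m n0m; have := n0_inv n n0n.
  move: (n.+1%:R^-1) (m.+1%:R^-1) => inv_n inv_m; lra.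
by have := ipnorm_ge0 (u m - u n); nra.
Qed.

Lemma minimizing_seq_lim_qf_le l : ip_lim u l -> qf l <= d.
Proof.
move=> ul; rewrite -ipnorm_sqr -(sqr_sqrtr d_ge0).
suff : nrm l <= Num.sqrt d by have := ipnorm_ge0 l; nra.
apply/ler_addgt0Pr => e e_gt0.
have [n0 n0_lim] := ul (e / 2) (divr_gt0 e_gt0 (ltr0Sn R 1)).
have [n1 n1_inv] := eventually_invSn_lt (exprn_gt0 2 (divr_gt0 e_gt0 (ltr0Sn R 1))).
pose n := maxn n0 n1.
have := n0_lim n (leq_maxl _ _); have := n1_inv n (leq_maxr _ _).
have := ler_ipnormB (u n) (u n - l); rewrite opprB addrC subrK.
have := qfu_lt n; rewrite -ipnorm_sqr -[d in d + _](sqr_sqrtr d_ge0).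
have := sqrtr_ge0 d; have := ipnorm_ge0 (u n); move: (n.+1%:R^-1) => inv_n; nra.
Qed.

End MinimizingSeq.

Lemma exists_minimizer : ip_complete ip ->
  exists2 x0, phi x0 = 1 & forall y, phi y = 1 -> qf x0 <= qf y.
Proof.
move=> ip_compl; have [u min_u] := exists_minimizing_seq.
have phiu1 n := (min_u n).1; have qfu_lt n := (min_u n).2.
have [l ul] := ip_compl _ (minimizing_seq_cauchy phiu1 qfu_lt).
exists l; first exact: hyperplane_closed phiu1 ul.
by move=> y phiy; apply: le_trans (minimizing_seq_lim_qf_le qfu_lt ul) (d_le phiy).
Qed.

End Minimizer.

Lemma minimizer_orthogonal x0 : phi x0 = 1 -> (forall y, phi y = 1 -> qf x0 <= qf y) ->
  forall v, phi v = 0 -> ip x0 v = 0.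
Proof.
move=> phix0 x0_min v phiv; have qv_ge0 := qf_ge0 v.
pose s := (qf v + 1)^-1.
have qv1_gt0 : 0 < qf v + 1 by lra.
have s_gt0 : 0 < s by rewrite invr_gt0.
have s_qv : s * qf v = 1 - s by rewrite /s; field; apply: lt0r_neq0.
(* Moving x0 by -s<x0, v> v stays in the hyperplane and would lower qf unless <x0, v> = 0. *)
have := x0_min (x0 + (- (s%:C%C * ip x0 v)) *: v).
rewrite phiD phiZ phiv scaler0 addr0 => /(_ phix0).
rewrite qfD qfZ ipZr; case: (ip x0 v) => a b /= qf_le.
have ab0 : s * (a ^+ 2 + b ^+ 2) * (s * qf v - 2) >= 0 by nra.
have : a ^+ 2 + b ^+ 2 <= 0.
  by move: ab0; rewrite s_qv nmulr_lge0 ?pmulr_rle0 //; lra.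
by have := sqr_ge0 a; have := sqr_ge0 b; move=> a2 b2 ab; congr Complex; nra.
Qed.

Hypothesis ip_compl : ip_complete ip.

Lemma riesz_representation : exists z, forall x, phi x = ip x z.
Proof.
have [phi_eq0|/existsNP[x1 /eqP phix1]] := pselect (forall x, phi x = 0).
  by exists 0 => x; rewrite phi_eq0 ip0r.
have phiy1 : phi ((phi x1)^-1 *: x1) = 1 by rewrite phiZ [_ *: _]mulVf.
have [x0 phix0 x0_min] := exists_minimizer phiy1 ip_compl.
have qx0 : qf x0 != 0 by apply: contra_eq_neq phix0 => /qf_eq0 ->; rewrite phi0 eq_sym oner_neq0.
exists ((qf x0)^-1%:C%C *: x0) => x.
have ip_x0x : ip x0 x = (phi x)^*%C * (qf x0)%:C%C.
  rewrite -ipxx -ipZr; apply/eqP; rewrite -subr_eq0 -ipBr; apply/eqP.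
  by apply: minimizer_orthogonal => //; rewrite phiB phiZ phix0 [_ *: _]mulr1 subrr.
rewrite ipZr conjc_real [ip x x0]ipC ip_x0x rmorphM /= conjcK oppr0 complexr0.
by rewrite mulrCA -rmorphM /= mulVf // mulr1.
Qed.

End Riesz.

Section Operators.
Implicit Types X Y S : V -> V.

Lemma bounded_op_ge0 X : is_bounded_op ip X ->
  exists2 M, 0 <= M & forall x, nrm (X x) <= M * nrm x.
Proof.
move=> [_ [M XM]]; exists `|M| => // x; apply: le_trans (XM x) _.
by apply: ler_wpM2r; [apply: ipnorm_ge0 | apply: ler_norm].
Qed.

Lemma bounded_opZ c X : is_bounded_op ip X -> is_bounded_op ip (opZ c X).
Proof.
move=> bX; have [M M_ge0 XM] := bounded_op_ge0 bX; case: bX => X_lin _; split.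
  by move=> a x y; rewrite /opZ X_lin scalerDr !scalerA mulrC.
exists (Normc.normc c * M) => x; rewrite /opZ ipnormZ -mulrA.
by apply: ler_wpM2l; [apply: normc_ge0 | apply: XM].
Qed.

Lemma bounded_opD X Y : is_bounded_op ip X -> is_bounded_op ip Y -> is_bounded_op ip (opD X Y).
Proof.
move=> bX bY; have [M _ XM] := bounded_op_ge0 bX; have [M' _ YM'] := bounded_op_ge0 bY.
case: bX bY => X_lin _ [Y_lin _]; split.
  by move=> a x y; rewrite /opD X_lin Y_lin scalerDr addrACA.
exists (M + M') => x; rewrite /opD mulrDl.
exact: le_trans (ler_ipnormD _ _) (lerD (XM x) (YM' x)).
Qed.

Lemma bounded_opM X Y : is_bounded_op ip X -> is_bounded_op ip Y -> is_bounded_op ip (opM X Y).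
Proof.
move=> bX bY; have [M M_ge0 XM] := bounded_op_ge0 bX; have [M' _ YM'] := bounded_op_ge0 bY.
case: bX bY => X_lin _ [Y_lin _]; split; first by move=> a x y; rewrite /opM Y_lin X_lin.
exists (M * M') => x; rewrite /opM -mulrA.
by apply: le_trans (XM _) _; apply: ler_wpM2l.
Qed.

Lemma adjoint_linear X S : is_adjoint ip X S -> is_linear_op S.
Proof. by move=> XS a x y; apply: ipr_ext => z; rewrite -XS !ipDr !ipZr -!XS. Qed.

Lemma adjoint_bounded X S : is_bounded_op ip X -> is_adjoint ip X S -> is_bounded_op ip S.
Proof.
move=> bX XS; split; first exact: adjoint_linear XS.
have [M M_ge0 XM] := bounded_op_ge0 bX; exists M => y.
have : nrm (S y) ^+ 2 <= nrm (S y) * (M * nrm y).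
  rewrite ipnorm_sqr -XS; apply: le_trans (Re_ip_le _ _) _.
  by rewrite mulrA [nrm (S y) * M]mulrC; apply: ler_wpM2r; [apply: ipnorm_ge0 | apply: XM].
have := ipnorm_ge0 (S y); have := mulr_ge0 M_ge0 (ipnorm_ge0 y).
by move: (M * nrm y) => My; nra.
Qed.

Lemma adjoint_unique X S S' : is_adjoint ip X S -> is_adjoint ip X S' -> S = S'.
Proof. by move=> XS XS'; apply: funext => y; apply: ipr_ext => x; rewrite -XS -XS'. Qed.

Hypothesis ip_compl : ip_complete ip.

Lemma exists_adjoint X : is_bounded_op ip X -> exists S, is_adjoint ip X S.
Proof.
move=> bX; have [M M_ge0 XM] := bounded_op_ge0 bX; case: bX => X_lin _.
suff /choice[S XS] : forall y, exists z, forall x, ip (X x) y = ip x z by exists S.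
move=> y; apply: (@riesz_representation (fun x => ip (X x) y) (M * nrm y)) => //.
- by move=> a x x'; rewrite X_lin ipDl ipZl.
- exact: mulr_ge0 M_ge0 (ipnorm_ge0 y).
- move=> x; apply: le_trans (normc_ip_le _ _) _.
  by rewrite mulrAC; apply: ler_wpM2r; [apply: ipnorm_ge0 | apply: XM].
Qed.

Lemma adjP X : is_bounded_op ip X -> is_adjoint ip X (adj ip X).
Proof. by move=> bX; apply: epsilon_spec; apply: exists_adjoint. Qed.

Lemma bounded_adj X : is_bounded_op ip X -> is_bounded_op ip (adj ip X).
Proof. by move=> bX; apply: adjoint_bounded bX (adjP bX). Qed.

Lemma adj_opZ c X : is_bounded_op ip X -> adj ip (opZ c X) = opZ (c^*)%C (adj ip X).
Proof.
move=> bX; apply: adjoint_unique (adjP (bounded_opZ c bX)) _ => x y.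
by rewrite /opZ ipZl ipZr conjcK (adjP bX).
Qed.

End Operators.
End InnerProduct.

Section Cartesian.
Variables (R : realType) (V : lmodType R[i]) (ip : V -> V -> R[i]).

Lemma adjM_add_Madj T : is_linear_op T -> is_linear_op (adj ip T) ->
  opD (opM (adj ip T) T) (opM T (adj ip T)) =
  opZ 2%:R (opD (opM (ReOp ip T) (ReOp ip T)) (opM (ImOp ip T) (ImOp ip T))).
Proof.
rewrite /ReOp /ImOp; move: (adj ip T) => S T_lin S_lin.
apply: funext => x; rewrite /opD /opM /opZ.
rewrite !(linZ T_lin, linZ S_lin, linD T_lin, linD S_lin).
set h := (2%:R : R[i])^-1; set k := (2%:R * 'i%C : R[i])^-1.
have ii : 'i%C * 'i%C = -1 :> R[i] by rewrite -expr2 sqr_i.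
have kk : k * k = - (h * h) by rewrite /k /h -invfM mulrACA ii mulrN1 invrN invfM.
rewrite !scaleN1r -!scalerN -!scalerDr !scalerA kk scaleNr -scalerBr.
rewrite sub_alternating_sum -[(_ + _) *+ 2]scaler_nat !scalerA.
have -> : 2 * (h * h * 2) = 1 :> R[i] by rewrite /h; field.
by rewrite scale1r addrC.
Qed.

End Cartesian.

Section OperatorNorm.
Variables (R : realType) (V : lmodType R[i]) (ip : V -> V -> R[i]) (N : (V -> V) -> R).
Hypothesis ip_hilbert : is_hilbert ip.
Hypothesis N_norm : is_op_norm ip N.
Hypothesis N_algebra : is_algebra_norm ip N.
Hypothesis N_selfadjoint : is_selfadjoint_norm ip N.
Implicit Types X T : V -> V.

Let ip_inner := ip_hilbert.1.
Let ip_compl := ip_hilbert.2.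

Lemma bounded_ReOp X : is_bounded_op ip X -> is_bounded_op ip (ReOp ip X).
Proof. by move=> bX; apply/bounded_opZ/bounded_opD/(bounded_adj ip_inner ip_compl bX). Qed.

Lemma bounded_ImOp X : is_bounded_op ip X -> is_bounded_op ip (ImOp ip X).
Proof.
move=> bX; apply/bounded_opZ/bounded_opD => //.
exact/bounded_opZ/(bounded_adj ip_inner ip_compl bX).
Qed.

Lemma N_ge0 X : is_bounded_op ip X -> 0 <= N X.
Proof. by case: N_norm => N_ge0 _ _ _; apply: N_ge0. Qed.

Lemma N_opZ c X : is_bounded_op ip X -> N (opZ c X) = Normc.normc c * N X.
Proof. by case: N_norm => _ _ N_Z _; apply: N_Z. Qed.

Lemma N_opD_le X Y : is_bounded_op ip X -> is_bounded_op ip Y -> N (opD X Y) <= N X + N Y.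
Proof. by case: N_norm => _ _ _ N_D; apply: N_D. Qed.

Lemma N_ReOp_le X : is_bounded_op ip X -> N (ReOp ip X) <= N X.
Proof.
move=> bX; have bXa := bounded_adj ip_inner ip_compl bX.
rewrite N_opZ; last exact: bounded_opD.
rewrite Normc.normcV normc_natr.
by have := N_opD_le bX bXa; rewrite N_selfadjoint //; lra.
Qed.

Lemma N_ReOp_expi_le_wN T t : is_bounded_op ip T -> N (ReOp ip (opZ (expi t) T)) <= wN ip N T.
Proof.
move=> bT; apply: sup_upper_bound; last by exists t.
split; first by exists (N (ReOp ip (opZ (expi t) T))), t.
exists (N T) => _ [s _ <-]; apply: le_trans (N_ReOp_le (bounded_opZ ip_inner _ bT)) _.
by rewrite N_opZ // normc_expi mul1r.
Qed.

Lemma ReOp_Npihalf T : is_bounded_op ip T -> ReOp ip (opZ (expi (- (pi / 2))) T) = ImOp ip T.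
Proof.
move=> bT; rewrite /ReOp adj_opZ // expi_Npihalf; apply: funext => x.
have conj_Ni : ((- 'i)^*)%C = 'i%C :> R[i].
  by apply/eqP; rewrite eq_complex /= oppr0 opprK !eqxx.
have inv_2i : (2 * 'i%C)^-1 = 2^-1 * - 'i%C :> R[i] by rewrite invfM complexiE invCi.
by rewrite /ImOp /opD /opZ !scalerDr !scalerA conj_Ni inv_2i mulrN mulNr mulrN1 opprK.
Qed.

Lemma N_adjM_add_Madj_le T : is_bounded_op ip T ->
  N (opD (opM (adj ip T) T) (opM T (adj ip T))) <=
  2 * (N (ReOp ip T) ^+ 2 + N (ImOp ip T) ^+ 2).
Proof.
move=> bT; have bRe := bounded_ReOp bT; have bIm := bounded_ImOp bT.
rewrite adjM_add_Madj; [|by case: bT | by case: (bounded_adj ip_inner ip_compl bT)].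
have bRe2 := bounded_opM bRe bRe; have bIm2 := bounded_opM bIm bIm.
rewrite N_opZ; last by apply: (bounded_opD ip_inner bRe2 bIm2).
rewrite normc_natr ler_pM2l //; apply: le_trans (N_opD_le bRe2 bIm2) _.
by apply: lerD; rewrite expr2; apply: N_algebra.
Qed.

End OperatorNorm.

Theorem corollary2p17 (R : realType) (V : lmodType R[i]) (ip : V -> V -> R[i])
  (N : (V -> V) -> R) :
  is_hilbert ip ->
  is_op_norm ip N -> is_algebra_norm ip N -> is_selfadjoint_norm ip N ->
  forall T : V -> V, is_bounded_op ip T ->
    (16%:R)^-1 * N (opD (opM (adj ip T) T) (opM T (adj ip T)))
      + (2%:R)^-1 * wN ip N T * `|N (ReOp ip T) - N (ImOp ip T)|
    <= wN ip N T ^+ 2.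
Proof.
move=> ip_hilbert N_norm N_algebra N_selfadjoint T bT.
apply: cartesian_ineq.
- exact: N_ge0 (bounded_ReOp ip_hilbert bT).
- have := N_ReOp_expi_le_wN ip_hilbert N_norm N_selfadjoint 0 bT.
  by congr (N (ReOp ip _) <= _); apply: funext => x; rewrite /opZ /expi cos0 sin0 scale1r.
- exact: N_ge0 (bounded_ImOp ip_hilbert bT).
- rewrite -ReOp_Npihalf //; exact: N_ReOp_expi_le_wN.
- exact: N_adjM_add_Madj_le.
Qed.
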